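(* Let $n\ge3$ be odd and write $c_j=\cos(2\pi j/n)$. Then $$Su_1:=\frac32\sum_{j=0}^{\lfloor n/4\rfloor}\sum_{k=0}^{\lfloor n/4\rfloor}\frac{1}{|c_j-c_k+1|}\ \le\ \frac38\,n^2\ln n.$$
   Context: $\ln$ denotes the natural logarithm. (This quantity is one of four pieces of $\sum_{j=0}^{(n-1)/2}\sum_{k=n}^{(3n-1)/2}1/|\lambda_j-\lambda_k|=\frac32\sum_{j,k=0}^{(n-1)/2}1/|c_j-c_k+1|$, where $\lambda_j$ are the eigenvalues of the normalized adjacency matrix of the Cayley graph of $D_{2n}$ with generators $\{a,a^{-1},b\}$.) *)

From Stdlib Require Import Reals Lra Lia Arith.
Open Scope R_scope.

Definition cc (n j : nat) : R := cos (2 * PI * INR j / INR n).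

(* Su_1 = 3/2 * sum_{j=0}^{floor(n/4)} sum_{k=0}^{floor(n/4)} 1/|c_j - c_k + 1|
   (sum_f_R0 f m sums f 0 + ... + f m, i.e. m+1 terms; (n/4)%nat = floor(n/4)). *)
Definition Su1 (n : nat) : R :=
  3 / 2 * sum_f_R0 (fun j =>
            sum_f_R0 (fun k => / Rabs (cc n j - cc n k + 1)) (n / 4)%nat)
          (n / 4)%nat.

(* For j <= m := floor(n/4) the angle 2 pi j / n lies in [0, pi/2), so 0 < c_j <= 1 and c_j
   decreases in j.  In row j the terms with k < j are at most 1 / c_j (as c_k <= 1) and those
   with k >= j are at most 1 (as c_k <= c_j), so row j is at most j / c_j + (m + 1 - j).
   Writing c_j = sin (pi/2 (n - 4j)/n) >= 0.86 (n - 4j)/n turns j / c_j into a multiple of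
   n/(n - 4j) - 1, and the sum of 1/(n - 4j) over j <= m is at most 1 + (ln n)/4 by comparison
   with the logarithm.  The resulting bound beats (3/8) n^2 ln n once ln n >= 5/3, i.e. for
   n >= 7; n = 3 and n = 5 are checked directly. *)
From Stdlib Require Import Reals Lra Lia Arith.
Open Scope R_scope.

Lemma ln_le_compat (x y : R) : 0 < x -> x <= y -> ln x <= ln y.
Proof.
  intros Hx [Hxy | <-]; [left; exact (ln_increasing x y Hx Hxy) | lra].
Qed.

Lemma ln_le_sub_one (y : R) : 0 < y -> ln y <= y - 1.
Proof.
  intros Hy.
  rewrite <- (exp_ln y) at 2 by exact Hy.
  pose proof (exp_ineq1_le (ln y)); lra.
Qed.

Lemma ln_3_ge_1 : 1 <= ln 3.
Proof. rewrite <- (ln_exp 1). apply ln_le_compat; [apply exp_pos | apply exp_le_3]. Qed.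

Lemma ln_ge_ratio (k p : nat) (x : R) :
  0 < x -> (0 < p)%nat -> 3 ^ k <= x ^ p -> INR k / INR p <= ln x.
Proof.
  intros Hx Hp Hpow.
  assert (Hp' : 0 < INR p) by (apply lt_0_INR; exact Hp).
  assert (Hln : INR k * ln 3 <= INR p * ln x).
  { rewrite <- !ln_pow by lra. apply ln_le_compat; [apply pow_lt; lra | exact Hpow]. }
  pose proof ln_3_ge_1. pose proof (pos_INR k).
  apply Rmult_le_reg_l with (INR p); [exact Hp'|].
  replace (INR p * (INR k / INR p)) with (INR k) by (field; lra).
  nra.
Qed.

Lemma ln_ge_5_3 (x : R) : 7 <= x -> 5 / 3 <= ln x.
Proof.
  intros Hx.
  assert (3 ^ 5 <= x ^ 3) by (assert (49 <= x * x) by nra; simpl; nra).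
  pose proof (ln_ge_ratio 5 3 x ltac:(lra) ltac:(lia) ltac:(assumption)) as Hratio.
  replace (INR 5 / INR 3) with (5 / 3) in Hratio by (simpl; field). exact Hratio.
Qed.

Lemma ln_5_ge_4_3 : 4 / 3 <= ln 5.
Proof.
  pose proof (ln_ge_ratio 4 3 5 ltac:(lra) ltac:(lia) ltac:(simpl; lra)) as Hratio.
  replace (INR 4 / INR 3) with (4 / 3) in Hratio by (simpl; field). exact Hratio.
Qed.

Lemma PI_lt_16_5 : PI < 16 / 5.
Proof.
  destruct (Rlt_le_dec PI (16 / 5)) as [Hlt | Hge]; [exact Hlt | exfalso].
  (* then 8/5 <= PI/2, so cos (8/5) >= 0, against its Taylor upper bound *)
  pose proof PI2_1.
  destruct (cos_bound (8 / 5) 0) as [_ Hub]; try lra.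
  assert (0 <= cos (8 / 5)) by (apply cos_ge_0; lra).
  unfold cos_approx, cos_term in Hub; simpl in Hub; lra.
Qed.

Lemma sin_ge_cubic (x : R) : 0 <= x <= PI / 2 -> x - x ^ 3 / 6 <= sin x.
Proof.
  intros Hx. pose proof PI_4.
  destruct (SIN x) as [Hlb _]; try lra.
  unfold sin_lb, sin_approx, sin_term in Hlb; simpl in Hlb.
  assert (Hx2 : x * x <= 4) by nra.
  assert (0 <= x ^ 5 * (42 - x * x)) by (apply Rmult_le_pos; [apply pow_le | ]; lra).
  simpl in *; nra.
Qed.

Lemma sin_half_PI_mul_ge (r : R) :
  0 <= r <= 1 -> 3 / 2 * r * (1 - (8 / 5 * r) ^ 2 / 6) <= sin (PI / 2 * r).
Proof.
  intros Hr. pose proof PI_lt_16_5. pose proof PI2_3_2.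
  set (x := PI / 2 * r).
  assert (Hx : 3 / 2 * r <= x <= 8 / 5 * r) by (unfold x; split; nra).
  assert (Hcubic : x - x ^ 3 / 6 <= sin x) by (apply sin_ge_cubic; unfold x; split; nra).
  assert (Hfactor : 0 <= 1 - (8 / 5 * r) ^ 2 / 6) by (simpl; nra).
  assert (x * x <= (8 / 5 * r) ^ 2) by (simpl; nra).
  simpl in *; nra.
Qed.

Lemma sin_half_PI_mul_ge_linear (r : R) : 0 <= r <= 1 -> 43 / 50 * r <= sin (PI / 2 * r).
Proof.
  intros Hr. pose proof (sin_half_PI_mul_ge r Hr).
  assert (3 / 2 * r * (1 - (8 / 5 * r) ^ 2 / 6) >= 43 / 50 * r) by (simpl; nra).
  lra.
Qed.

Lemma cc_eq_sin (n j : nat) : (0 < n)%nat ->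
  cc n j = sin (PI / 2 * ((INR n - 4 * INR j) / INR n)).
Proof.
  intros Hn. assert (0 < INR n) by (apply lt_0_INR; exact Hn).
  unfold cc. rewrite <- sin_shift. f_equal. field. lra.
Qed.

Lemma cc_le_1 (n k : nat) : cc n k <= 1.
Proof. apply COS_bound. Qed.

Lemma cc_antitone (n j k : nat) : (j <= k)%nat -> (2 * k <= n)%nat -> (0 < n)%nat ->
  cc n k <= cc n j.
Proof.
  intros Hjk Hkn Hn.
  assert (HN : 0 < INR n) by (apply lt_0_INR; exact Hn).
  assert (Hk : 2 * INR k <= INR n)
    by (replace (2 * INR k) with (INR (2 * k)) by (rewrite mult_INR; simpl; ring);
        apply le_INR; exact Hkn).
  assert (Hj : 0 <= INR j <= INR k) by (split; [apply pos_INR | apply le_INR; exact Hjk]).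
  pose proof PI_RGT_0.
  assert (Hangle : forall i, 0 <= INR i <= INR k -> 0 <= 2 * PI * INR i / INR n <= PI).
  { intros i Hi. split.
    - apply Rmult_le_pos; [nra | left; apply Rinv_0_lt_compat; lra].
    - apply Rmult_le_reg_r with (INR n); [lra|].
      unfold Rdiv; rewrite Rmult_assoc, Rinv_l by lra; nra. }
  destruct (Nat.eq_dec j k) as [-> | Hne]; [lra|].
  assert (INR j < INR k) by (apply lt_INR; lia).
  destruct (Hangle j Hj), (Hangle k (conj (pos_INR k) (Rle_refl _))).
  unfold cc. left. apply cos_decreasing_1; try lra.
  unfold Rdiv. apply Rmult_lt_compat_r; [apply Rinv_0_lt_compat; lra | nra].
Qed.

Lemma INR_4_mul_add_1_le (j n : nat) : (4 * j + 1 <= n)%nat -> 4 * INR j + 1 <= INR n.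
Proof.
  intros H. apply le_INR in H. rewrite plus_INR, mult_INR in H. simpl INR in H. lra.
Qed.

Lemma cc_ge_linear (n j : nat) : (4 * j + 1 <= n)%nat ->
  43 / 50 * ((INR n - 4 * INR j) / INR n) <= cc n j.
Proof.
  intros H.
  pose proof (INR_4_mul_add_1_le j n H). pose proof (pos_INR j).
  rewrite cc_eq_sin by lia. apply sin_half_PI_mul_ge_linear. split.
  - left; apply Rdiv_lt_0_compat; lra.
  - apply Rmult_le_reg_r with (INR n); [lra|].
    unfold Rdiv; rewrite Rmult_assoc, Rinv_l by lra; lra.
Qed.

Lemma cc_pos (n j : nat) : (4 * j + 1 <= n)%nat -> 0 < cc n j.
Proof.
  intros H. eapply Rlt_le_trans; [|exact (cc_ge_linear n j H)].
  pose proof (INR_4_mul_add_1_le j n H). pose proof (pos_INR j).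
  apply Rmult_lt_0_compat; [lra | apply Rdiv_lt_0_compat; lra].
Qed.

Lemma cc_5_1_ge : 1 / 4 <= cc 5 1.
Proof.
  rewrite cc_eq_sin by lia.
  replace ((INR 5 - 4 * INR 1) / INR 5) with (1 / 5) by (simpl; field).
  pose proof (sin_half_PI_mul_ge (1 / 5) ltac:(lra)). simpl in *. lra.
Qed.

Lemma sum_f_R0_le_piecewise (g : nat -> R) (a b : R) (j m : nat) :
  (forall k, (k <= m)%nat -> (k < j)%nat -> g k <= a) ->
  (forall k, (k <= m)%nat -> (j <= k)%nat -> g k <= b) ->
  sum_f_R0 g m <= INR (Nat.min (S m) j) * a + INR (S m - j) * b.
Proof.
  induction m as [|m IH]; intros Ha Hb.
  - simpl. destruct j as [|j].
    + specialize (Hb 0%nat (le_n _) (le_n _)). simpl; lra.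
    + specialize (Ha 0%nat (le_n _) ltac:(lia)).
      replace (Nat.min 1 (S j)) with 1%nat by lia. replace (1 - S j)%nat with 0%nat by lia.
      simpl; lra.
  - rewrite tech5.
    specialize (IH (fun k Hk => Ha k ltac:(lia)) (fun k Hk => Hb k ltac:(lia))).
    destruct (Nat.lt_ge_cases (S m) j) as [Hlt | Hge].
    + specialize (Ha (S m) (le_n _) Hlt).
      replace (Nat.min (S (S m)) j) with (S (S m)) by lia.
      replace (Nat.min (S m) j) with (S m) in IH by lia.
      replace (S (S m) - j)%nat with 0%nat by lia.
      replace (S m - j)%nat with 0%nat in IH by lia.
      rewrite (S_INR (S m)). simpl INR in *. lra.
    + specialize (Hb (S m) (le_n _) Hge).
      replace (Nat.min (S (S m)) j) with j by lia.
      replace (Nat.min (S m) j) with j in IH by lia.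
      replace (S (S m) - j)%nat with (S (S m - j)) by lia.
      rewrite (S_INR (S m - j)). lra.
Qed.

Lemma sum_f_R0_INR (m : nat) : sum_f_R0 INR m = INR m * (INR m + 1) / 2.
Proof.
  induction m as [|m IH]; [simpl; field|].
  rewrite tech5, IH, (S_INR m). field.
Qed.

Lemma sum_inv_arith_le_ln (N d : R) (m : nat) : 0 < d -> d * INR m < N ->
  sum_f_R0 (fun j => / (N - d * INR j)) m
    <= / (N - d * INR m) + (ln N - ln (N - d * INR m)) / d.
Proof.
  intros Hd. induction m as [|m IH]; intros Hm.
  - simpl. rewrite Rmult_0_r, Rminus_0_r. lra.
  - rewrite tech5, S_INR in *.
    pose proof (pos_INR m).
    specialize (IH ltac:(nra)).
    set (t := N - d * INR m) in *.
    replace (N - d * (INR m + 1)) with (t - d) by (unfold t; ring).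
    assert (Ht : d < t) by (unfold t; lra).
    (* ln ((t-d)/t) <= (t-d)/t - 1 = -d/t bounds the new term 1/t by the log increment *)
    assert (Hlog : ln ((t - d) * / t) <= (t - d) * / t - 1)
      by (apply ln_le_sub_one; apply Rdiv_lt_0_compat; lra).
    rewrite ln_mult, ln_Rinv in Hlog by (try apply Rinv_0_lt_compat; lra).
    replace ((t - d) * / t - 1) with (- (d * / t)) in Hlog by (field; lra).
    assert (/ t = (d * / t) / d) by (field; lra).
    assert (d * / t / d <= (ln t - ln (t - d)) / d)
      by (unfold Rdiv; apply Rmult_le_compat_r; [left; apply Rinv_0_lt_compat|]; lra).
    assert ((ln N - ln t) / d + (ln t - ln (t - d)) / d = (ln N - ln (t - d)) / d)
      by (field; lra).
    lra.
Qed.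

Lemma sum_inv_shifted_diff_le (c : nat -> R) (m j : nat) :
  (j <= m)%nat -> 0 < c j ->
  (forall k, (k <= m)%nat -> c k <= 1) ->
  (forall k, (j <= k <= m)%nat -> c k <= c j) ->
  sum_f_R0 (fun k => / Rabs (c j - c k + 1)) m <= INR j / c j + INR (S m - j).
Proof.
  intros Hjm Hcj Hle1 Hanti.
  eapply Rle_trans; [apply (sum_f_R0_le_piecewise _ (/ c j) 1 j m)|].
  - intros k Hk _. pose proof (Hle1 k Hk).
    rewrite Rabs_pos_eq by lra. apply Rinv_le_contravar; lra.
  - intros k Hk Hjk. pose proof (Hanti k (conj Hjk Hk)).
    rewrite Rabs_pos_eq by lra. rewrite <- Rinv_1. apply Rinv_le_contravar; lra.
  - replace (Nat.min (S m) j) with j by lia. unfold Rdiv. lra.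
Qed.

Lemma div4_odd_bounds (n : nat) : Nat.Odd n -> (4 * (n / 4) + 1 <= n <= 4 * (n / 4) + 3)%nat.
Proof.
  intros [p Hp]. pose proof (Nat.div_mod n 4 ltac:(lia)).
  pose proof (Nat.mod_upper_bound n 4 ltac:(lia)). lia.
Qed.

Definition row_bound (n : nat) : R :=
  sum_f_R0 (fun j => INR j / cc n j + INR (S (n / 4) - j)) (n / 4).

Lemma Su1_le_row_bound (n : nat) : Nat.Odd n -> Su1 n <= 3 / 2 * row_bound n.
Proof.
  intros Hodd. pose proof (div4_odd_bounds n Hodd) as Hm.
  unfold Su1, row_bound. set (m := (n / 4)%nat) in *.
  apply Rmult_le_compat_l; [lra|]. apply sum_Rle. intros j Hj.
  apply sum_inv_shifted_diff_le; [exact Hj | apply cc_pos; lia | intros; apply cc_le_1 |].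
  intros k Hk. apply cc_antitone; lia.
Qed.

(* 25/86 = 1 / (4 * 43/50) *)
Lemma div_cc_le (n j : nat) : (4 * j + 1 <= n)%nat ->
  INR j / cc n j <= 25 / 86 * INR n * (INR n / (INR n - 4 * INR j) - 1).
Proof.
  intros H. pose proof (cc_ge_linear n j H) as Hc.
  pose proof (INR_4_mul_add_1_le j n H). pose proof (pos_INR j).
  assert (0 < (INR n - 4 * INR j) / INR n) by (apply Rdiv_lt_0_compat; lra).
  apply Rle_trans with (INR j / (43 / 50 * ((INR n - 4 * INR j) / INR n))).
  - apply Rmult_le_compat_l; [lra|]. apply Rinv_le_contravar; [nra | exact Hc].
  - right. field. lra.
Qed.

Lemma row_bound_le_large (n : nat) : (7 <= n)%nat -> Nat.Odd n ->
  row_bound n <= INR n ^ 2 * ln (INR n) / 4.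
Proof.
  intros H7 Hodd. pose proof (div4_odd_bounds n Hodd) as Hm.
  unfold row_bound. set (m := (n / 4)%nat) in *. set (N := INR n).
  assert (HN7 : 7 <= N) by (unfold N; replace 7 with (INR 7) by (simpl; ring); apply le_INR; exact H7).
  assert (Hm1 : 4 * INR m + 1 <= N) by (apply INR_4_mul_add_1_le; lia).
  assert (Hm3 : N <= 4 * INR m + 3).
  { unfold N. assert (Hle : (n <= 4 * m + 3)%nat) by lia. apply le_INR in Hle.
    rewrite plus_INR, mult_INR in Hle. simpl INR in Hle. lra. }
  pose proof (pos_INR m).
  assert (Hrow : forall j, (j <= m)%nat -> INR j / cc n j + INR (S m - j)
    <= / (N - 4 * INR j) * (25 / 86 * N * N) + (INR m + 1 - 25 / 86 * N) - INR j).
  { intros j Hj.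
    pose proof (div_cc_le n j ltac:(lia)) as Hdiv. fold N in Hdiv.
    assert (INR j <= INR m) by (apply le_INR; exact Hj).
    assert (25 / 86 * N * (N / (N - 4 * INR j) - 1)
              = / (N - 4 * INR j) * (25 / 86 * N * N) - 25 / 86 * N) by (field; lra).
    rewrite minus_INR, S_INR by lia. lra. }
  eapply Rle_trans; [apply sum_Rle; exact Hrow|].
  rewrite minus_sum, sum_plus, <- scal_sum, sum_cte, sum_f_R0_INR, S_INR.
  assert (HS := sum_inv_arith_le_ln N 4 m ltac:(lra) ltac:(lra)).
  set (S := sum_f_R0 (fun j => / (N - 4 * INR j)) m) in *.
  pose proof (ln_ge_5_3 N HN7). set (L := ln N) in *.
  assert (0 <= ln (N - 4 * INR m)) by (rewrite <- ln_1; apply ln_le_compat; lra).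
  assert (/ (N - 4 * INR m) <= 1) by (rewrite <- Rinv_1; apply Rinv_le_contravar; lra).
  assert (HS1 : S <= 1 + L / 4) by lra.
  assert (0 <= N * N) by nra.
  assert (HSN : 25 / 86 * N * N * S <= N * N * L / 4).
  { apply Rle_trans with (N * N * (25 / 86 * (1 + L / 4))); [nra|].
    assert (25 / 86 * (1 + L / 4) <= L / 4) by lra. nra. }
  (* the remaining terms sum to (m + 1) ((m + 2)/2 - 25/86 N) <= 0 *)
  assert ((INR m + 2) / 2 <= 25 / 86 * N) by lra.
  simpl. nra.
Qed.

Lemma row_bound_3 : row_bound 3 = 1.
Proof. unfold row_bound; simpl. unfold Rdiv. ring. Qed.

Lemma row_bound_5_le : row_bound 5 <= 7.
Proof.
  unfold row_bound. replace (5 / 4)%nat with 1%nat by reflexivity. simpl sum_f_R0.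
  pose proof cc_5_1_ge.
  assert (/ cc 5 1 <= 4) by (rewrite <- (Rinv_inv 4); apply Rinv_le_contravar; lra).
  simpl INR. unfold Rdiv. lra.
Qed.

Theorem mainTheorem4 (n : nat) (Hn : (3 <= n)%nat) (Hodd : Nat.Odd n) :
  Su1 n <= 3 / 8 * (INR n) ^ 2 * ln (INR n).
Proof.
  apply (Rle_trans _ _ _ (Su1_le_row_bound n Hodd)).
  destruct (le_lt_dec 7 n) as [H7 | H7].
  - pose proof (row_bound_le_large n H7 Hodd). lra.
  - assert (n = 3 \/ n = 5)%nat as [-> | ->] by (destruct Hodd as [p Hp]; lia).
    + rewrite row_bound_3. replace (INR 3) with 3 by (simpl; ring).
      pose proof ln_3_ge_1. lra.
    + replace (INR 5) with 5 by (simpl; ring).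
      pose proof row_bound_5_le. pose proof ln_5_ge_4_3. lra.
Qed.
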